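(* Let $G=(V,E)$ be a finite simple graph with $n=|V|$ vertices, and let $\mathbf{L}=\mathbf{D}-\mathbf{A}\in\mathbb{R}^{n\times n}$ be its graph Laplacian. Let $\phi_1,\dots,\phi_n$ be an orthonormal basis of $\mathbb{R}^n$ consisting of eigenvectors of $\mathbf{L}$, with $\mathbf{L}\phi_i=\lambda_i\phi_i$ and $0\le\lambda_1\le\cdots\le\lambda_n$. Let $T>0$, $\varepsilon\in(0,1)$, $M_\varepsilon>0$, and set $\Theta(\varepsilon)=\{i\in\{1,\dots,n\}:\lambda_i\le M_\varepsilon\}$. Let $U_T,U_T^\varepsilon\in\mathbb{R}^n$ satisfy $\|U_T-U_T^\varepsilon\|\le\varepsilon$. Let $$U(t)=\sum_{i=1}^n e^{\lambda_i(T-t)}\langle U_T,\phi_i\rangle\,\phi_i\quad(t\in[0,T])$$ be the solution of $\frac{dU}{dt}(t)+\mathbf{L}U(t)=0$ with $U(T)=U_T$, and define $$\mathbf{P}^{\varepsilon}U^\varepsilon(t)=\sum_{i\in\Theta(\varepsilon)}e^{\lambda_i(T-t)}\langle U_T^\varepsilon,\phi_i\rangle\,\phi_i .$$ Then for every $t\in[0,T]$, $$\|U(t)-\mathbf{P}^{\varepsilon}U^\varepsilon(t)\|\le M_\varepsilon^{-1}\Big\|\frac{d}{dt}U(t)\Big\|+e^{M_\varepsilon(T-t)}\varepsilon .$$ Furthermore, if $M_\varepsilon=\frac{1}{T}\ln(\varepsilon^{-\gamma})$ with $\gamma\in(0,1)$, then for every $t\in[0,T]$, $$\|U(t)-\mathbf{P}^{\varepsilon}U^\varepsilon(t)\|\le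 \frac{T}{\ln(\varepsilon^{-\gamma})}\Big\|\frac{d}{dt}U(t)\Big\|+\varepsilon^{1-\gamma\left(1-\frac{t}{T}\right)}.$$
   Context: $\mathbf{A}$ is the adjacency matrix ($A_{ij}=1$ if $\{x_i,x_j\}\in E$, else $0$), $\mathbf{D}$ is the diagonal degree matrix with $D_{ii}=\sum_j A_{ij}$. $\langle A,B\rangle=A^{\mathrm T}B$ is the standard inner product on $\mathbb{R}^n$ and $\|\cdot\|$ the Euclidean norm. $\mathbf{P}^\varepsilon U^\varepsilon(t)$ is the cut-off (truncated spectral) regularized approximation of $U(t)$ computed from noisy terminal data $U_T^\varepsilon$; $M_\varepsilon$ is the regularization parameter. *)

From HB Require Import structures.
From mathcomp Require Import all_boot all_order all_algebra.
From mathcomp Require Import all_classical all_reals all_analysis.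
Set Implicit Arguments. Unset Strict Implicit. Unset Printing Implicit Defensive.
Import Order.TTheory GRing.Theory Num.Theory.
Local Open Scope ring_scope.

Section Defs.
Variables (R : realType) (n : nat).

Definition dotv (u v : 'cV[R]_n) : R := (u^T *m v) 0 0.
Definition enorm (v : 'cV[R]_n) : R := Num.sqrt (dotv v v).

Definition simple_graph (e : rel 'I_n) : Prop :=
  (forall i j, e i j = e j i) /\ (forall i, ~~ e i i).

Definition adjacency (e : rel 'I_n) : 'M[R]_n := \matrix_(i, j) (e i j)%:R.
Definition degree_mx (e : rel 'I_n) : 'M[R]_n :=
  \matrix_(i, j) ((i == j)%:R * \sum_k adjacency e i k).
Definition laplacian (e : rel 'I_n) : 'M[R]_n := degree_mx e - adjacency e.

Definition Usol (lam : 'I_n -> R) (phi : 'I_n -> 'cV[R]_n) (T : R)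
  (UT : 'cV[R]_n) (t : R) : 'cV[R]_n :=
  \sum_i (expR (lam i * (T - t)) * dotv UT (phi i)) *: phi i.

Definition Ureg (lam : 'I_n -> R) (phi : 'I_n -> 'cV[R]_n) (T M : R)
  (UTe : 'cV[R]_n) (t : R) : 'cV[R]_n :=
  \sum_(i | lam i <= M) (expR (lam i * (T - t)) * dotv UTe (phi i)) *: phi i.

Definition dtv (U : R -> 'cV[R]_n) (t : R) : 'cV[R]_n :=
  \col_i derive1 (fun s => U s i 0) t.
End Defs.

From HB Require Import structures.
From mathcomp Require Import all_boot all_order all_algebra.
From mathcomp Require Import all_classical all_reals all_analysis.
From mathcomp Require Import ring lra.
Set Implicit Arguments. Unset Strict Implicit. Unset Printing Implicit Defensive.
Import Order.TTheory GRing.Theory Num.Theory.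
Local Open Scope ring_scope.

(* Expand everything in the orthonormal basis (phi_i).  The i-th coordinate of
   U(t) - P^eps U^eps(t) is e^{lambda_i (T-t)} <U_T - U_T^eps, phi_i> on the retained
   modes (lambda_i <= M) and e^{lambda_i (T-t)} <U_T, phi_i> on the discarded ones
   (lambda_i > M).  A discarded coordinate is at most 1/M times the corresponding
   coordinate -lambda_i e^{lambda_i (T-t)} <U_T, phi_i> of dU/dt, and a retained one at
   most e^{M (T-t)} |<U_T - U_T^eps, phi_i>|; summing squares and applying Bessel's
   inequality gives the first estimate.  The second is the first for
   M = ln(eps^-gamma) / T, where e^{M (T-t)} eps = eps^{1 - gamma (1 - t/T)}. *)

Lemma sqrtr_le_add (R : rcfType) (s x y : R) :
  0 <= x -> 0 <= y -> s <= x ^+ 2 + y ^+ 2 -> Num.sqrt s <= x + y.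
Proof.
move=> x0 y0 hs; rewrite -(ger0_norm (addr_ge0 x0 y0)) -sqrtr_sqr.
by apply: ler_wsqrtr; apply: (le_trans hs); nra.
Qed.

Section InnerProduct.
Variables (R : realType) (n : nat).
Implicit Types (u v w : 'cV[R]_n).

Lemma dotvE u v : dotv u v = \sum_k u k 0 * v k 0.
Proof. by rewrite /dotv !mxE; apply: eq_bigr => k _; rewrite mxE. Qed.

Lemma dotvC u v : dotv u v = dotv v u.
Proof. by rewrite !dotvE; apply: eq_bigr => k _; rewrite mulrC. Qed.

Lemma dotv_suml (I : finType) (P : pred I) (F : I -> 'cV[R]_n) v :
  dotv (\sum_(i | P i) F i) v = \sum_(i | P i) dotv (F i) v.
Proof.
rewrite dotvE; under eq_bigr => k _ do rewrite summxE mulr_suml.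
by rewrite exchange_big; apply: eq_bigr => i _; rewrite dotvE.
Qed.

Lemma dotvZl a u v : dotv (a *: u) v = a * dotv u v.
Proof. by rewrite !dotvE mulr_sumr; apply: eq_bigr => k _; rewrite mxE mulrA. Qed.

Lemma dotvBl u w v : dotv (u - w) v = dotv u v - dotv w v.
Proof.
rewrite !dotvE -sumrB; apply: eq_bigr => k _.
by rewrite !mxE mulrBl.
Qed.

Lemma dotvBr u w v : dotv v (u - w) = dotv v u - dotv v w.
Proof. by rewrite dotvC dotvBl !(dotvC v). Qed.

Lemma dotv_ge0 v : 0 <= dotv v v.
Proof. by rewrite dotvE sumr_ge0 // => k _; rewrite -expr2 sqr_ge0. Qed.

Lemma enorm_ge0 v : 0 <= enorm v.
Proof. exact: sqrtr_ge0. Qed.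

Lemma enorm_sqr v : enorm v ^+ 2 = dotv v v.
Proof. by rewrite sqr_sqrtr // dotv_ge0. Qed.

Variable phi : 'I_n -> 'cV[R]_n.
Hypothesis phi_orthonormal : forall i j, dotv (phi i) (phi j) = (i == j)%:R.

Lemma dotv_sumr v (b : 'I_n -> R) :
  dotv v (\sum_j b j *: phi j) = \sum_j b j * dotv v (phi j).
Proof.
by rewrite dotvC dotv_suml; apply: eq_bigr => j _; rewrite dotvZl dotvC.
Qed.

Lemma dotv_coords (a b : 'I_n -> R) :
  dotv (\sum_i a i *: phi i) (\sum_j b j *: phi j) = \sum_i a i * b i.
Proof.
rewrite dotv_suml; apply: eq_bigr => i _; rewrite dotvZl dotv_sumr; congr (_ * _).
rewrite (bigD1 i) //= phi_orthonormal eqxx mulr1 big1 ?addr0 // => j /negbTE.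
by rewrite phi_orthonormal eq_sym => ->; rewrite mulr0.
Qed.

Lemma enorm_coords (a : 'I_n -> R) :
  enorm (\sum_i a i *: phi i) = Num.sqrt (\sum_i a i ^+ 2).
Proof. by rewrite /enorm dotv_coords; under eq_bigr do rewrite -expr2. Qed.

Lemma bessel_inequality v : \sum_i dotv v (phi i) ^+ 2 <= enorm v ^+ 2.
Proof.
set c := fun i => dotv v (phi i).
have := dotv_ge0 (v - \sum_i c i *: phi i).
rewrite dotvBl !dotvBr dotv_coords dotv_sumr (dotvC _ v) dotv_sumr enorm_sqr.
under [\sum_j c j * _]eq_bigr => i _ do rewrite -expr2.
under [\sum_i c i * c i]eq_bigr => i _ do rewrite -expr2.
lra.
Qed.

End InnerProduct.

Lemma is_derive_expR_scaled (R : realType) (a T c t : R) :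
  is_derive t 1 (fun s => expR (a * (T - s)) * c) (- a * expR (a * (T - t)) * c).
Proof.
have hlin : is_derive t (1 : R) (fun s : R => a * (T - s)) (- a).
  by apply: is_derive_eq; rewrite add0r mul1r; exact: mulrN1.
have hexp := is_derive1_comp (is_derive_expR _) hlin.
by apply: is_derive_eq; rewrite scaler0 add0r -[c *: _]/(c * _); ring.
Qed.

Lemma dtv_Usol (R : realType) n (lam : 'I_n -> R) phi T UT t :
  dtv (Usol lam phi T UT) t =
  \sum_i (- lam i * expR (lam i * (T - t)) * dotv UT (phi i)) *: phi i.
Proof.
apply/matrixP => i j; rewrite (ord1 j) !mxE summxE.
have -> : (fun s => Usol lam phi T UT s i 0) =
    \sum_k (fun s => expR (lam k * (T - s)) * (dotv UT (phi k) * phi k i 0)).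
  rewrite fct_sumE; apply/funext => s; rewrite /Usol summxE.
  by apply: eq_bigr => k _; rewrite !mxE mulrA.
have hder := is_derive_sum (fun k => @is_derive_expR_scaled R (lam k) T
                                       (dotv UT (phi k) * phi k i 0) t).
rewrite derive1E derive_val.
by apply: eq_bigr => k _; rewrite !mxE !mulrA.
Qed.

Section CutoffError.
Variables (R : realType) (n : nat) (lam : 'I_n -> R) (phi : 'I_n -> 'cV[R]_n).
Variables (T M t : R) (UT UTe : 'cV[R]_n).

Let E i := expR (lam i * (T - t)).

Lemma Usol_sub_Ureg :
  Usol lam phi T UT t - Ureg lam phi T M UTe t =
  \sum_i (if lam i <= M then E i * dotv (UT - UTe) (phi i)
          else E i * dotv UT (phi i)) *: phi i.
Proof.
rewrite /Usol /Ureg (big_mkcond (fun i => lam i <= M)) -sumrB.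
apply: eq_bigr => i _; case: ifP => _; last by rewrite subr0.
by rewrite -scalerBl -mulrBr dotvBl.
Qed.

Lemma cutoff_coord_sqr_le i (c d : R) :
  0 < M -> t <= T ->
  (if lam i <= M then E i * d else E i * c) ^+ 2 <=
  (M^-1 * (- lam i * E i * c)) ^+ 2 + (expR (M * (T - t)) * d) ^+ 2.
Proof.
move=> M0 tT; case: ifP => hlam.
  have hE : E i <= expR (M * (T - t)) by rewrite ler_expR ler_wpM2r // subr_ge0.
  rewrite -[X in X <= _]add0r lerD ?sqr_ge0 // !exprMn ler_wpM2r ?sqr_ge0 //.
  by rewrite lerXn2r // nnegrE expR_ge0.
have hgt1 : 1 <= M^-1 * lam i.
  by rewrite -(mulVf (lt0r_neq0 M0)) ler_pM2l ?invr_gt0 // ltW // ltNge hlam.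
have -> : (M^-1 * (- lam i * E i * c)) ^+ 2 = (M^-1 * lam i) ^+ 2 * (E i * c) ^+ 2.
  by ring.
rewrite -[X in X <= _]addr0 lerD ?sqr_ge0 // -[X in X <= _]mul1r.
by rewrite ler_wpM2r ?sqr_ge0 // exprn_ege1.
Qed.

Hypothesis phi_orthonormal : forall i j, dotv (phi i) (phi j) = (i == j)%:R.

Lemma cutoff_error_le :
  0 < M -> t <= T ->
  enorm (Usol lam phi T UT t - Ureg lam phi T M UTe t)
    <= M^-1 * enorm (dtv (Usol lam phi T UT) t)
       + expR (M * (T - t)) * enorm (UT - UTe).
Proof.
move=> M0 tT; rewrite Usol_sub_Ureg dtv_Usol !enorm_coords //.
set c := fun i => dotv UT (phi i); set d := fun i => dotv (UT - UTe) (phi i).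
have hdU0 : 0 <= \sum_i (- lam i * E i * c i) ^+ 2.
  by rewrite sumr_ge0 // => i _; rewrite sqr_ge0.
apply: sqrtr_le_add.
- by rewrite mulr_ge0 ?sqrtr_ge0 // invr_ge0 ltW.
- by rewrite mulr_ge0 ?expR_ge0 ?enorm_ge0.
apply: le_trans (ler_sum _ (fun i _ => @cutoff_coord_sqr_le i (c i) (d i) M0 tT)) _.
rewrite big_split /= exprMn sqr_sqrtr // lerD //.
- by rewrite mulr_sumr; apply: ler_sum => i _; rewrite exprMn.
- under eq_bigr do rewrite exprMn.
  rewrite -mulr_sumr [leRHS]exprMn.
  by apply: ler_wpM2l; [exact: sqr_ge0 | exact: bessel_inequality].
Qed.

End CutoffError.

Lemma powR_cutoff_exponent (R : realType) (eps gamma T t : R) :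
  0 < eps -> 0 < T ->
  eps `^ (1 - gamma * (1 - t / T)) = expR (ln (eps `^ (- gamma)) / T * (T - t)) * eps.
Proof.
move=> eps0 T0; have epsE : eps = expR (ln eps) by rewrite lnK // posrE.
rewrite ln_powR {1 3}epsE -expRM -expRD; congr expR.
by field; rewrite lt0r_neq0.
Qed.

Theorem theorem4 (R : realType) (n : nat) (e : rel 'I_n)
  (lam : 'I_n -> R) (phi : 'I_n -> 'cV[R]_n) (T eps M : R) (UT UTe : 'cV[R]_n) :
  simple_graph e ->
  (forall i j, dotv (phi i) (phi j) = (i == j)%:R) ->
  (forall i, laplacian R e *m phi i = lam i *: phi i) ->
  (forall i j : 'I_n, (i <= j)%N -> lam i <= lam j) ->
  (forall i, 0 <= lam i) ->
  0 < T -> 0 < eps < 1 -> 0 < M ->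
  enorm (UT - UTe) <= eps ->
  (forall t, 0 <= t <= T ->
     enorm (Usol lam phi T UT t - Ureg lam phi T M UTe t)
       <= M^-1 * enorm (dtv (Usol lam phi T UT) t) + expR (M * (T - t)) * eps)
  /\
  (forall gamma, 0 < gamma < 1 -> M = ln (eps `^ (- gamma)) / T ->
   forall t, 0 <= t <= T ->
     enorm (Usol lam phi T UT t - Ureg lam phi T M UTe t)
       <= T / ln (eps `^ (- gamma)) * enorm (dtv (Usol lam phi T UT) t)
          + eps `^ (1 - gamma * (1 - t / T))).
Proof.
(* Only the orthonormality of the phi_i matters: the bound holds for any real
   lambda_i, whether or not they are the sorted Laplacian eigenvalues. *)
move=> _ orth _ _ _ T0 /andP[eps0 _] M0 hUT.
have first_estimate t : 0 <= t <= T ->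
    enorm (Usol lam phi T UT t - Ureg lam phi T M UTe t)
      <= M^-1 * enorm (dtv (Usol lam phi T UT) t) + expR (M * (T - t)) * eps.
  case/andP=> _ tT; apply: le_trans (cutoff_error_le lam UT UTe orth M0 tT) _.
  by rewrite lerD2l ler_wpM2l ?expR_ge0.
split=> // gamma _ hM t ht.
by rewrite powR_cutoff_exponent // -hM -[T / _]invf_div -hM; exact: first_estimate.
Qed.
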